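(* The inclusion $K\colon\Delta_0\hookrightarrow\mathbf{Grph}$ is not a saturated class of arities: there exist $\Delta_0$-induced endofunctors of $\mathbf{Grph}$ whose composite is not $\Delta_0$-induced.
   Context: Here $\mathcal V=\mathbf{Set}$. $\mathbb G_1$ is the category freely generated by two parallel arrows $0\rightrightarrows 1$, and $\mathbf{Grph}=[\mathbb G_1^{\mathrm{op}},\mathbf{Set}]$ is the category of directed multigraphs. $\Delta_0$ is the (small, dense) full subcategory of $\mathbf{Grph}$ on the graphs $[n]=(0\to 1\to\cdots\to n)$ for $n\ge 0$. An endofunctor $G$ of $\mathbf{Grph}$ is $\Delta_0$-induced if it is the pointwise left Kan extension along $K$ of its restriction $GK$; $\Delta_0$ is a saturated class of arities if $\Delta_0$-induced endofunctors are closed under composition. *)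

From mathcomp Require Import all_boot.
Set Implicit Arguments. Unset Strict Implicit. Unset Printing Implicit Defensive.

(** Directed multigraphs = presheaves on G_1 (0 ⇉ 1): a set of vertices,
    a set of edges, and source/target maps. *)
Record graph := Graph {
  vert : Type;
  edge : Type;
  src : edge -> vert;
  tgt : edge -> vert }.

Record ghom (X Y : graph) := GHom {
  hV : vert X -> vert Y;
  hE : edge X -> edge Y;
  hsrc : forall e, src (hE e) = hV (src e);
  htgt : forall e, tgt (hE e) = hV (tgt e) }.

Definition homeq (X Y : graph) (f g : ghom X Y) : Prop :=
  (forall v, hV f v = hV g v) /\ (forall e, hE f e = hE g e).

Definition gid (X : graph) : ghom X X :=
  @GHom X X id id (fun _ => erefl) (fun _ => erefl).

Definition gcomp (X Y Z : graph) (g : ghom Y Z) (f : ghom X Y) : ghom X Z.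
Proof.
refine (@GHom X Z (fun v => hV g (hV f v)) (fun e => hE g (hE f e)) _ _).
- by move=> e; rewrite hsrc hsrc.
- by move=> e; rewrite htgt htgt.
Defined.

Record endofunctor := Endofunctor {
  fobj : graph -> graph;
  fmap : forall X Y : graph, ghom X Y -> ghom (fobj X) (fobj Y);
  fmap_homeq : forall X Y (f g : ghom X Y), homeq f g -> homeq (fmap f) (fmap g);
  fmap_id : forall X, homeq (fmap (gid X)) (gid (fobj X));
  fmap_comp : forall X Y Z (g : ghom Y Z) (f : ghom X Y),
      homeq (fmap (gcomp g f)) (gcomp (fmap g) (fmap f)) }.

Definition fcomp (G F : endofunctor) : endofunctor.
Proof.
refine (@Endofunctor (fun X => fobj G (fobj F X))
          (fun X Y f => fmap G (fmap F f)) _ _ _).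
- by move=> X Y f g H; apply: fmap_homeq; apply: fmap_homeq.
- move=> X; have [H1 H2] := fmap_id G (fobj F X).
  have [K1 K2] := fmap_homeq G (fmap_id F X).
  by split => x /=; rewrite K1 H1 || rewrite K2 H2.
- move=> X Y Z g f; have [H1 H2] := fmap_comp G (fmap F g) (fmap F f).
  have [K1 K2] := fmap_homeq G (fmap_comp F g f).
  by split => x /=; rewrite K1 H1 || rewrite K2 H2.
Defined.

(** The linear graph [n] = (0 -> 1 -> ... -> n): vertices 0..n, edges i : i -> i+1. *)
Definition lin (n : nat) : graph :=
  @Graph 'I_n.+1 'I_n (fun i => widen_ord (leqnSn n) i) (fun i => lift ord0 i).

(** Δ0 is the full subcategory on the [n]; K is the inclusion.
    G is Δ0-induced iff G is the pointwise left Kan extension along K of GK,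
    i.e. for every graph X the cocone (G x : G[n] -> G X) indexed by the
    comma category K/X (objects (n, x : [n] -> X), morphisms f : [m] -> [n]
    with x ∘ f = x') is a colimit cocone in Grph. *)
Definition Delta0_induced (G : endofunctor) : Prop :=
  forall (X Y : graph)
         (c : forall n (x : ghom (lin n) X), ghom (fobj G (lin n)) Y),
    (forall m n (f : ghom (lin m) (lin n)) (x : ghom (lin n) X),
        homeq (c m (gcomp x f)) (gcomp (c n x) (fmap G f))) ->
    exists u : ghom (fobj G X) Y,
      (forall n (x : ghom (lin n) X), homeq (gcomp u (fmap G x)) (c n x)) /\
      (forall u' : ghom (fobj G X) Y,
          (forall n (x : ghom (lin n) X), homeq (gcomp u' (fmap G x)) (c n x)) ->
          homeq u' u).

Definition Delta0_saturated : Prop :=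
  forall F G : endofunctor,
    Delta0_induced F -> Delta0_induced G -> Delta0_induced (fcomp G F).

From mathcomp Require Import all_boot.
From Stdlib Require Import FunctionalExtensionality PropExtensionality ProofIrrelevance.
Set Implicit Arguments. Unset Strict Implicit. Unset Printing Implicit Defensive.

(* Symmetrisation F (adjoin a reversed copy of every edge) and the functor G
   sending a graph to the discrete graph of its 2-paths are both Δ0-induced:
   every vertex or edge of F X or G X is the image of a generic element (a
   point, an edge or a 2-path of X) through which every other representation
   by a map [n] -> X factors, so the Kan-extension colimit is computed
   elementwise.  The zigzag a -> c <- b of X = (a -> c <- b), read as the
   2-path a -> c -> b of F X, is however not the image of any 2-path of F[n]:
   a 2-path of F[n] that turns around at a vertex runs twice along the same
   edge of [n], hence of X.  The corresponding vertex of G F X thus lies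
   outside every leg of the cocone, and two maps into a codiscrete graph that
   differ only there contradict the uniqueness part of the colimit. *)

Lemma homeq_eq X Y (f g : ghom X Y) : homeq f g -> f = g.
Proof.
case: f g => fV fE fs ft [gV gE gs gt] [/= eqV eqE].
have eV : fV = gV by apply: functional_extensionality.
have eE : fE = gE by apply: functional_extensionality.
subst gV gE; by rewrite (proof_irrelevance _ fs gs) (proof_irrelevance _ ft gt).
Qed.

(* The objects 0 and 1 of G_1: [cells X k] is the presheaf X evaluated at k. *)
Inductive cell := cell_vert | cell_edge.

Definition cells (X : graph) (k : cell) : Type :=
  if k is cell_vert then vert X else edge X.

Definition hC X Y (f : ghom X Y) (k : cell) : cells X k -> cells Y k :=
  match k as k return cells X k -> cells Y k with
  | cell_vert => hV f
  | cell_edge => hE f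
  end.
Arguments hC {X Y} f k.

Lemma hC_comp X Y Z (g : ghom Y Z) (f : ghom X Y) k (a : cells X k) :
  hC (gcomp g f) k a = hC g k (hC f k a).
Proof. by case: k in a *. Qed.

Lemma homeqP X Y (f g : ghom X Y) :
  homeq f g <-> forall k (a : cells X k), hC f k a = hC g k a.
Proof.
split=> [[eqV eqE] [] | eqC]; [exact: eqV | exact: eqE | split].
- exact: eqC cell_vert.
- exact: eqC cell_edge.
Qed.

Record generic_rep (G : endofunctor) (X : graph) (k : cell)
    (a : cells (fobj G X) k) := GenericRep {
  rep_dim : nat;
  rep_map : ghom (lin rep_dim) X;
  rep_cell : cells (fobj G (lin rep_dim)) k;
  rep_hit : hC (fmap G rep_map) k rep_cell = a;
  rep_universal : forall n (x : ghom (lin n) X) b, hC (fmap G x) k b = a ->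
    exists2 f : ghom (lin rep_dim) (lin n),
      gcomp x f = rep_map & hC (fmap G f) k rep_cell = b }.

Section GenericReps.

Variable G : endofunctor.
Hypothesis reps : forall X k (a : cells (fobj G X) k), generic_rep a.

Lemma Delta0_induced_of_generic_reps : Delta0_induced G.
Proof.
move=> X Y c c_cocone.
have cocone m n (f : ghom (lin m) (lin n)) x :
    c m (gcomp x f) = gcomp (c n x) (fmap G f).
  exact/homeq_eq/c_cocone.
pose u k (a : cells (fobj G X) k) :=
  hC (c _ (rep_map (reps a))) k (rep_cell (reps a)).
have u_leg n (x : ghom (lin n) X) k b :
    u k (hC (fmap G x) k b) = hC (c n x) k b.
  rewrite /u; case: (reps _) => m x0 a0 /= _ /(_ n x b erefl) [f <- <-].
  by rewrite cocone hC_comp.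
have covered k (a : cells (fobj G X) k) :
    exists n (x : ghom (lin n) X) b, hC (fmap G x) k b = a.
  by case: (reps a) => m x0 a0 hit _; exists m, x0, a0.
have u_src e : src (u cell_edge e) = u cell_vert (src e).
  have [n [x [b <-]]] := covered cell_edge e.
  by rewrite (u_leg n x cell_edge) !hsrc (u_leg n x cell_vert).
have u_tgt e : tgt (u cell_edge e) = u cell_vert (tgt e).
  have [n [x [b <-]]] := covered cell_edge e.
  by rewrite (u_leg n x cell_edge) !htgt (u_leg n x cell_vert).
pose uG := GHom u_src u_tgt.
have uG_u k (a : cells (fobj G X) k) : hC uG k a = u k a by case: k in a *.
exists uG; split=> [n x | u' u'_legs].
  by apply/homeqP => k b; rewrite hC_comp uG_u u_leg.
apply/homeqP => k a; rewrite uG_u /u; case: (reps a) => m x0 a0 /= <- _.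
by have /homeqP leg := u'_legs m x0; rewrite -hC_comp leg.
Qed.

End GenericReps.

Definition codisc (T : Type) : graph := @Graph T (T * T) fst snd.

Definition to_codisc X T (phi : vert X -> T) : ghom X (codisc T) :=
  @GHom X (codisc T) phi (fun e => (phi (src e), phi (tgt e)))
    (fun _ => erefl) (fun _ => erefl).

Lemma homeq_codisc X T (f g : ghom X (codisc T)) :
  (forall v, hV f v = hV g v) -> homeq f g.
Proof.
move=> eqV; split=> // e.
move: (hsrc f e) (htgt f e) (hsrc g e) (htgt g e).
by case: (hE f e) (hE g e) => [a b] [a' b'] /= -> -> -> ->; rewrite !eqV.
Qed.

Lemma Delta0_induced_vert_covered G : Delta0_induced G ->
  forall X (v : vert (fobj G X)),
    exists n (x : ghom (lin n) X) w, hV (fmap G x) w = v.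
Proof.
move=> G_induced X v.
pose covered w := exists n (x : ghom (lin n) X) w', hV (fmap G x) w' = w.
have [u [_ u_uniq]] := G_induced X (codisc Prop)
  (fun n _ => to_codisc (fun _ => True))
  (fun m n f x => homeq_codisc (fun _ => erefl)).
have [covered_u _] : homeq (to_codisc covered) u.
  apply: u_uniq => n x; apply: homeq_codisc => w /=.
  by apply: propositional_extensionality; split=> // _; exists n, x, w.
have [True_u _] : homeq (to_codisc (fun _ => True)) u.
  by apply: u_uniq => n x; apply: homeq_codisc.
change (covered v); by have /= -> := etrans (covered_u v) (esym (True_u v)).
Qed.

Lemma I0_absurd (i : 'I_0) : False.
Proof. by case: i. Qed.

Definition vert_lin (X : graph) (v : vert X) : ghom (lin 0) X :=
  @GHom (lin 0) X (fun _ => v) (fun i => False_rect _ (I0_absurd i))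
    (fun i => False_ind _ (I0_absurd i)) (fun i => False_ind _ (I0_absurd i)).

Definition edge_lin (X : graph) (e : edge X) : ghom (lin 1) X.
Proof.
refine (@GHom (lin 1) X (fun i : 'I_2 => if val i == 0 then src e else tgt e)
  (fun _ => e) _ _) => i; by rewrite (ord1 i).
Defined.

Lemma comp_vert_lin X Y (x : ghom X Y) v :
  gcomp x (vert_lin v) = vert_lin (hV x v).
Proof. by apply: homeq_eq; split=> // i; case: (I0_absurd i). Qed.

Lemma comp_edge_lin X Y (x : ghom X Y) e :
  gcomp x (edge_lin e) = edge_lin (hE x e).
Proof. by apply: homeq_eq; split=> //= i; case: ifP; rewrite ?hsrc ?htgt. Qed.

Definition sym (X : graph) : graph :=
  @Graph (vert X) (edge X * bool)
    (fun eb => if eb.2 then src eb.1 else tgt eb.1)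
    (fun eb => if eb.2 then tgt eb.1 else src eb.1).

Definition sym_map X Y (f : ghom X Y) : ghom (sym X) (sym Y).
Proof.
refine (@GHom (sym X) (sym Y) (hV f) (fun eb => (hE f eb.1, eb.2)) _ _);
  by case=> e [] /=; rewrite ?hsrc ?htgt.
Defined.

Definition sym_functor : endofunctor.
Proof.
refine (@Endofunctor sym sym_map _ _ _).
- by move=> X Y f g [eqV eqE]; split=> //= -[e b]; rewrite eqE.
- by move=> X; split=> // -[e b].
- by move=> X Y Z g f; split=> // -[e b].
Defined.

Lemma sym_functor_induced : Delta0_induced sym_functor.
Proof.
apply: Delta0_induced_of_generic_reps => X [v | [e b]].
  refine (@GenericRep sym_functor _ cell_vert _ 0 (@vert_lin X v) ord0 _ _)
    => // n x i <-.
  by exists (@vert_lin (lin n) i); rewrite ?comp_vert_lin.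
refine (@GenericRep sym_functor _ cell_edge _ 1 (@edge_lin X e) (ord0, b) _ _)
  => // n x [j b'] [<- <-].
by exists (@edge_lin (lin n) j); rewrite ?comp_edge_lin.
Qed.

Definition path2 (Y : graph) := {p : edge Y * edge Y | tgt p.1 = src p.2}.

Lemma path2_eq Y (p q : path2 Y) : sval p = sval q -> p = q.
Proof.
case: p q => [a pa] [b pb] /= eq_ab; subst b.
by rewrite (proof_irrelevance _ pa pb).
Qed.

Definition path2_map X Y (f : ghom X Y) (p : path2 X) : path2 Y.
Proof.
exists (hE f (sval p).1, hE f (sval p).2).
by rewrite /= htgt hsrc (proj2_sig p).
Defined.

Definition path2_graph (Y : graph) : graph :=
  @Graph (path2 Y) Empty_set (fun e => match e with end)
    (fun e => match e with end).

Definition path2_graph_map X Y (f : ghom X Y) :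
  ghom (path2_graph X) (path2_graph Y) :=
  @GHom (path2_graph X) (path2_graph Y) (path2_map f) (fun e => match e with end)
    (fun e => match e with end) (fun e => match e with end).

Definition path2_functor : endofunctor.
Proof.
refine (@Endofunctor path2_graph path2_graph_map _ _ _).
- by move=> X Y f g [_ eqE]; split=> [p | []]; apply: path2_eq; rewrite /= !eqE.
- by move=> X; split=> [[[e1 e2] p] | []]; apply: path2_eq.
- by move=> X Y Z g f; split=> [p | []]; apply: path2_eq.
Defined.

Definition path2_lin (Y : graph) (p : path2 Y) : ghom (lin 2) Y.
Proof.
case: p => [[e1 e2] /= p12].
refine (@GHom (lin 2) Y
  (fun i : 'I_3 => match val i with 0 => src e1 | 1 => tgt e1 | _ => tgt e2 end)
  (fun i : 'I_2 => if val i == 0 then e1 else e2) _ _);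
  by case=> [[|[|m]] lt_m2].
Defined.

Definition generic_path2 : path2 (lin 2).
Proof. by exists (ord0, ord_max); apply: val_inj. Defined.

Lemma comp_path2_lin X Y (x : ghom X Y) p :
  gcomp x (path2_lin p) = path2_lin (path2_map x p).
Proof.
case: p => [[e1 e2] p12]; apply: homeq_eq; split=> /= i; last by case: ifP.
by case: i => [[|[|m]] lt_m3] /=; rewrite ?hsrc ?htgt.
Qed.

Lemma path2_map_generic Y (p : path2 Y) :
  path2_map (path2_lin p) generic_path2 = p.
Proof. by apply: path2_eq; case: p => [[e1 e2] p12]. Qed.

Lemma path2_functor_induced : Delta0_induced path2_functor.
Proof.
apply: Delta0_induced_of_generic_reps => X [p | []].
refine (@GenericRep path2_functor _ cell_vert _ 2 (path2_lin p) generic_path2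
  (path2_map_generic p) _) => n x w <-.
by exists (path2_lin w); [exact: comp_path2_lin | exact: path2_map_generic].
Qed.

(* The cospan a -> c <- b, with a = Some true, b = Some false and c = None. *)
Definition cospan : graph :=
  @Graph (option bool) bool (fun e => Some e) (fun _ => None).

Definition zigzag : path2 (sym cospan).
Proof. by exists ((true, true), (false, false)). Defined.

Lemma zigzag_not_covered n (x : ghom (lin n) cospan) (w : path2 (sym (lin n))) :
  path2_map (sym_map x) w <> zigzag.
Proof.
case: w => [[[i b] [j b']] /= tgt_src] /(congr1 sval) [xi_a eq_b xj_b eq_b'].
move: tgt_src; rewrite eq_b eq_b' /= => /lift_inj eq_ij.
by move: xi_a; rewrite eq_ij xj_b.
Qed.

Lemma sym_path2_not_induced :
  ~ Delta0_induced (fcomp path2_functor sym_functor).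
Proof.
move/Delta0_induced_vert_covered/(_ cospan zigzag) => [n [x [w]]].
exact: zigzag_not_covered.
Qed.

Theorem corollary7p5 :
  ~ Delta0_saturated /\
  exists F G : endofunctor,
    Delta0_induced F /\ Delta0_induced G /\ ~ Delta0_induced (fcomp G F).
Proof.
have sym_ind := sym_functor_induced; have path2_ind := path2_functor_induced.
have not_ind := sym_path2_not_induced.
split; first by move/(_ _ _ sym_ind path2_ind).
by exists sym_functor, path2_functor.
Qed.
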